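(* Let $T$ be a fractal CQCA on the spin-$1/2$ chain and let $P=\bigotimes\sigma_i$ be a finite tensor product of Pauli matrices different from the identity. Then for every $k\in\mathbb{N}$ there exists $m\in\mathbb{N}$ such that $T^m(P)$ is (a multiple of) a tensor product containing at least $k$ non-identity Pauli matrices.
   Context: A CQCA is an automorphism $T$ of $\bigotimes_{x\in\mathbb{Z}}M_2$ commuting with translations and mapping Pauli products to multiples of Pauli products; labelling Pauli products by $\xi\in\mathcal{P}^2$ ($\mathcal{P}$ = Laurent polynomials in $u$ over $\mathbb{Z}_2$) one has $T(W(\xi))\propto W(\mathbf{a}\xi)$ for a $2\times 2$ matrix $\mathbf{a}$ over $\mathcal{P}$. $T$ is centered if $\mathbf{a}$ has palindromic entries ($p(u^{-1})=p(u)$) and determinant $1$. A centered CQCA is fractal if $\mathbf{a}$ is neither periodic ($\mathbf{a}^p=\mathbb{1}$ for some $p\ge1$) nor has gliders (non-zero $\xi$ with $\mathbf{a}\xi=u^k\xi$ for some integer $k\neq0$). *)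

(* Laurent polynomials over Z_2 are modelled as the monoid
   algebra {malg 'F_2[int]} (from multinomials' monalg), where the exponent
   monoid is (int, +); we equip it with its (commutative) ring structure. *)
From HB Require Import structures.
From mathcomp Require Import all_boot all_order all_algebra.
From mathcomp Require Import finmap.
From mathcomp.multinomials Require Import monalg.
Set Implicit Arguments.
Unset Strict Implicit.
Unset Printing Implicit Defensive.
Import GRing.Theory.
Local Open Scope fset_scope.
Local Open Scope ring_scope.

Definition laurent : Type := {malg 'F_2[int]}.
HB.instance Definition _ := GRing.Zmodule.on laurent.

Section LaurentRing.
Implicit Types (g : laurent).

Definition upow (k : int) : laurent := << (1 : 'F_2) *g k >>.

Definition lmul g1 g2 : laurent :=
  \sum_(k1 <- msupp g1) \sum_(k2 <- msupp g2)
     << g1@_k1 * g2@_k2 *g (k1 + k2)%R >>.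

Definition lone : laurent := upow 0.

Lemma lmulr g1 g2 : lmul g1 g2 =
  \sum_(k2 <- msupp g2) \sum_(k1 <- msupp g1) << g1@_k1 * g2@_k2 *g (k1 + k2)%R >>.
Proof. by rewrite /lmul exchange_big. Qed.

Lemma lmulw (d1 d2 : {fset int}) g1 g2 :
  msupp g1 `<=` d1 -> msupp g2 `<=` d2 ->
  lmul g1 g2 = \sum_(k1 <- d1) \sum_(k2 <- d2) << g1@_k1 * g2@_k2 *g (k1 + k2)%R >>.
Proof.
move=> le_d1 le_d2; rewrite /lmul (big_fset_incl _ le_d1) /=.
  apply/eq_bigr=> k1 _; apply/big_fset_incl => // k _ /mcoeff_outdom ->.
  by rewrite mulr0 monalgU0.
move=> k _ /mcoeff_outdom g1k.
by rewrite big1 => // k' _; rewrite g1k mul0r monalgU0.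
Qed.

Lemma lmulUg c k g :
  lmul << c *g k >> g = \sum_(k' <- msupp g) << c * g@_k' *g (k + k')%R >>.
Proof.
rewrite (lmulw msuppU_le (fsubset_refl _)) big_seq_fset1.
by apply/eq_bigr => k' _; rewrite mcoeffUU.
Qed.

Lemma lmulgU c k g :
  lmul g << c *g k >> = \sum_(k' <- msupp g) << g@_k' * c *g (k' + k)%R >>.
Proof.
rewrite (lmulw (fsubset_refl _) msuppU_le).
by apply/eq_bigr=> k' _; rewrite big_seq_fset1 mcoeffUU.
Qed.

Lemma lmulUU c1 c2 k1 k2 :
  lmul << c1 *g k1 >> << c2 *g k2 >> = << c1 * c2 *g (k1 + k2)%R >>.
Proof. by rewrite (lmulw msuppU_le msuppU_le) !big_seq_fset1 !mcoeffUU. Qed.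

Lemma lmul0g : left_zero 0 lmul.
Proof. by move=> g; rewrite /lmul msupp0 big_seq_fset0. Qed.

Lemma lmulg0 : right_zero 0 lmul.
Proof. by move=> g; rewrite lmulr msupp0 big_seq_fset0. Qed.

Lemma lmul1g : left_id lone lmul.
Proof.
move=> g; rewrite /lone /upow lmulUg [RHS]monalgE.
by apply/eq_bigr=> kg _; rewrite mul1r add0r.
Qed.

Lemma lmulg1 : right_id lone lmul.
Proof.
move=> g; rewrite /lone /upow lmulgU [RHS]monalgE.
by apply/eq_bigr=> k _; rewrite mulr1 addr0.
Qed.

Lemma lmulgDl : left_distributive lmul +%R.
Proof.
move=> g1 g2 g.
rewrite [in RHS](@lmulw _ (msupp g) g1 g (fsubsetUl _ (msupp g2)) (fsubset_refl _)).
rewrite [in RHS](@lmulw _ (msupp g) g2 g (fsubsetUr (msupp g1) _) (fsubset_refl _)).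
rewrite (lmulw (msuppD_le _ _) (fsubset_refl _)).
rewrite -big_split /=; apply/eq_bigr=> k1 _.
rewrite -big_split /=; apply/eq_bigr=> k2 _.
by rewrite mcoeffD mulrDl monalgUD.
Qed.

Lemma lmulgDr : right_distributive lmul +%R.
Proof.
move=> g g1 g2.
rewrite [in RHS](@lmulw (msupp g) _ g g1 (fsubset_refl _) (fsubsetUl _ (msupp g2))).
rewrite [in RHS](@lmulw (msupp g) _ g g2 (fsubset_refl _) (fsubsetUr (msupp g1) _)).
rewrite (lmulw (fsubset_refl _) (msuppD_le _ _)).
rewrite -big_split /=; apply/eq_bigr=> k1 _.
rewrite -big_split /=; apply/eq_bigr=> k2 _.
by rewrite mcoeffD mulrDr monalgUD.
Qed.

Lemma lmulEl1 g1 g2 :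
  lmul g1 g2 = \sum_(k1 <- msupp g1) lmul << g1@_k1 *g k1 >> g2.
Proof. by apply/eq_bigr=> k _; rewrite lmulUg. Qed.

Lemma lmulEr1 g1 g2 :
  lmul g1 g2 = \sum_(k2 <- msupp g2) lmul g1 << g2@_k2 *g k2 >>.
Proof. by rewrite lmulr; apply/eq_bigr=> k _; rewrite lmulgU. Qed.

Lemma lmulA : associative lmul.
Proof.
move=> g1 g2 g3.
rewrite [RHS](big_morph (lmul^~ _) (fun _ _ => lmulgDl _ _ _) (lmul0g _)).
rewrite lmulEl1; apply/eq_bigr=> k1 _.
rewrite [LHS](big_morph (lmul _) (fun _ _ => lmulgDr _ _ _) (lmulg0 _)).
rewrite [RHS](big_morph (lmul^~ _) (fun _ _ => lmulgDl _ _ _) (lmul0g _)).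
apply/eq_bigr=> k2 _.
rewrite [LHS](big_morph (lmul _) (fun _ _ => lmulgDr _ _ _) (lmulg0 _)).
by rewrite lmulEr1; apply/eq_bigr=> k3 _; rewrite !lmulUU mulrA addrA.
Qed.

Lemma lone_neq0 : lone != 0.
Proof.
apply/eqP/malgP=> /(_ 0%R) /eqP.
by rewrite mcoeffUU mcoeff0 oner_eq0.
Qed.

Lemma lmulC : commutative lmul.
Proof.
move=> g1 g2; rewrite /lmul [RHS]exchange_big /=.
by apply/eq_bigr=> k1 _; apply/eq_bigr=> k2 _; rewrite mulrC addrC.
Qed.

End LaurentRing.

HB.instance Definition _ := GRing.Zmodule_isComNzRing.Build laurent
  lmulA lmulC lmul1g lmulgDl lone_neq0.

Definition palindromic (p : laurent) : Prop :=
  forall n : int, p@_n = p@_(- n).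

(* The CQCA is described by its 2x2 matrix a over P, acting on Pauli
   labels xi in P^2 (column vectors): T(W(xi)) ~ W(a xi). *)
Definition centered (a : 'M[laurent]_2) : Prop :=
  (forall i j, palindromic (a i j)) /\ \det a = 1.

Definition periodic (a : 'M[laurent]_2) : Prop :=
  exists p : nat, (0 < p)%N /\ a ^+ p = 1.

Definition has_glider (a : 'M[laurent]_2) : Prop :=
  exists (xi : 'cV[laurent]_2) (k : int),
    xi != 0 /\ k != 0 /\ a *m xi = upow k *: xi.

Definition fractal (a : 'M[laurent]_2) : Prop :=
  centered a /\ ~ periodic a /\ ~ has_glider a.

(* Number of non-identity tensor factors of the Pauli product W(xi):
   site x carries a non-identity Pauli iff the u^x coefficient of
   xi_1 or of xi_2 is non-zero. *)
Definition pauli_weight (xi : 'cV[laurent]_2) : nat :=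
  #|` fsetU (msupp (xi 0 0)) (msupp (xi 1 0)) |.

From HB Require Import structures.
From mathcomp Require Import all_boot all_order all_algebra.
From mathcomp Require Import finmap.
From mathcomp.multinomials Require Import monalg.
From mathcomp Require Import ring zify.
From Stdlib Require Import Classical.
Set Implicit Arguments.
Unset Strict Implicit.
Unset Printing Implicit Defensive.
Import GRing.Theory.
Local Open Scope fset_scope.
Local Open Scope ring_scope.

(* Fractality is used through a single fact: no nonzero y satisfies
   a^p y = u^s y with p > 0.  If y and a y are parallel, y is an eigenvector
   whose eigenvalue solves z^2 + (tr a) z + 1 = 0 and is therefore a monomial
   u^k, giving a glider or (k = 0, via Cayley-Hamilton) a^2 = 1; otherwise a^p
   is the scalar u^s and det a = 1 forces a^(2p) = 1.

   Suppose every nonzero vector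
   reaches weight k, but the orbit x_n = a^n xi never exceeds weight k.  Since
   a spreads supports by at most r sites per step, and vectors of support width
   at most S are finitely many up to translation, there is a uniform time M in
   which every vector of width at most S reaches weight k.  A part of x_n cut
   off from the rest by a gap wider than 2rM would evolve independently and
   push the total weight of the orbit above k; applying this across the at most
   k points of the support bounds the width of all x_n uniformly.  Up to
   translation the x_n then take finitely many values, so x_(n2) = u^s x_(n1)
   for some n1 < n2, which is impossible. *)

(** * Laurent polynomials over F_2 *)

Lemma F2_neq0 (c : 'F_2) : c != 0 -> c = 1.
Proof. by case: c => [[|[|//]]] ? nz; apply/val_inj. Qed.

Lemma pchar_laurent : 2 \in [pchar laurent].
Proof.
rewrite inE /=; apply/eqP/malgP => k.
rewrite mulr2n mcoeffD mcoeff0 [1]/(upow 0) /upow mcoeffU.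
by case: eqP => _; [apply/val_inj | rewrite addr0].
Qed.

Lemma sum_neq0 (V : zmodType) (I : eqType) (s : seq I) (F : I -> V) :
  \sum_(i <- s) F i != 0 -> exists2 i, i \in s & F i != 0.
Proof.
move=> nz; apply/hasP; apply: contraNT nz => /hasPn F0.
by rewrite big1_seq // => i /andP [_ /F0 /negPn /eqP].
Qed.

Lemma upow0 : upow 0 = 1. Proof. by []. Qed.

Lemma upowD (i j : int) : upow (i + j) = upow i * upow j.
Proof. by rewrite /upow [_ * _]lmulUU mulr1. Qed.

Lemma upowNK (k : int) : upow (- k) * upow k = 1.
Proof. by rewrite -upowD addNr. Qed.

Lemma mcoeff_upowM (k n : int) (f : laurent) : (upow k * f)@_n = f@_(n - k).
Proof.
rewrite [_ * _]lmulUg raddf_sum /=.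
have shift k' : (k + k' == n) = (k' == n - k) by apply/eqP/eqP => ?; lia.
have [fnk|fnk] := boolP (n - k \in msupp f).
  rewrite (big_fsetD1 (n - k)) //= mcoeffU mul1r shift eqxx mulr1n.
  rewrite big1_fset ?addr0 // => k' /fsetD1P [ne_k' _] _.
  by rewrite mcoeffU shift (negbTE ne_k') mulr0n.
rewrite (mcoeff_outdom fnk) big1_fset // => k' fk' _.
by rewrite mcoeffU shift; case: eqP => // Ek; rewrite -Ek fk' in fnk.
Qed.

Lemma msupp_upowM (k n : int) (f : laurent) :
  (n \in msupp (upow k * f)) = (n - k \in msupp f).
Proof. by rewrite -!mcoeff_neq0 mcoeff_upowM. Qed.

Lemma msuppM (f g : laurent) n : n \in msupp (f * g) ->
  exists k1 k2, [/\ k1 \in msupp f, k2 \in msupp g & n = k1 + k2].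
Proof.
rewrite -mcoeff_neq0 [_ * _]/(lmul f g) raddf_sum /= => /sum_neq0 [k1 fk1].
rewrite (raddf_sum (mcoeff n)) /= => /sum_neq0 [k2 gk2]; rewrite mcoeffU.
by case: (k1 + k2 =P n) => [<- _|]; [exists k1, k2 | rewrite mulr0n eqxx].
Qed.

Lemma dvdp_XnP (R : fieldType) (p : {poly R}) N : p %| 'X^N -> exists k, p %= 'X^k.
Proof.
have -> : ('X^N : {poly R}) = ('X - 0%:P) ^+ N by rewrite subr0.
by case/dvdp_exp_XsubCP => k _; rewrite subr0; exists k.
Qed.

Lemma quadratic_root_monomial (R : fieldType) (N : nat) (C D T : {poly R}) :
  D != 0 -> 'X^N * (C ^+ 2 + D ^+ 2) + T * C * D = 0 ->
  exists i j, C * 'X^j %= D * 'X^i.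
Proof.
move=> D0 E; set g := gcdp C D.
have g0 : g != 0 by rewrite gcdp_eq0 negb_and D0 orbT.
set C1 := C %/ g; set D1 := D %/ g.
have HC : C = C1 * g by rewrite divpK // dvdp_gcdl.
have HD : D = D1 * g by rewrite divpK // dvdp_gcdr.
have cop : coprimep C1 D1 by apply: coprimep_div_gcd; rewrite D0 orbT.
have E1 : 'X^N * (C1 ^+ 2 + D1 ^+ 2) + T * C1 * D1 = 0.
  have : g ^+ 2 * ('X^N * (C1 ^+ 2 + D1 ^+ 2) + T * C1 * D1) = 0.
    by rewrite -E HC HD; ring.
  by move/eqP; rewrite mulf_eq0 expf_eq0 (negbTE g0) andbF => /eqP.
(* Each cofactor divides X^N times the square of the other one, to which it is coprime. *)
have dvd_Xn (P Q : {poly R}) : coprimep P Q ->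
    'X^N * (P ^+ 2 + Q ^+ 2) + T * P * Q = 0 -> P %| 'X^N.
  move=> copPQ EPQ; rewrite -(Gauss_dvdpl _ (coprimep_expr 2 copPQ)).
  have -> : 'X^N * Q ^+ 2 = - ('X^N * P ^+ 2 + T * P * Q).
    by apply/eqP; rewrite -subr_eq0 opprK -EPQ; apply/eqP; ring.
  rewrite dvdpNr dvdp_add //; first by rewrite dvdp_mull // exprS dvdp_mulIl.
  by rewrite dvdp_mulr // dvdp_mulIr.
have [i C1_Xi] := dvdp_XnP (dvd_Xn _ _ cop E1).
have [j D1_Xj] : exists j, D1 %= 'X^j.
  apply/dvdp_XnP/(dvd_Xn _ C1); first by rewrite coprimep_sym.
  by rewrite -E1; ring.
exists i, j; rewrite HC HD.
apply: (@eqp_trans _ ('X^i * g * 'X^j)); first exact/eqp_mulr/eqp_mulr.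
have -> : 'X^i * g * 'X^j = 'X^j * g * 'X^i by ring.
by rewrite eqp_sym; apply/eqp_mulr/eqp_mulr.
Qed.

Lemma eqp_F2 (p q : {poly 'F_2}) : p %= q -> p = q.
Proof.
by case/eqpP => [[c1 c2]] /andP [/F2_neq0 -> /F2_neq0 ->]; rewrite !scale1r.
Qed.

Definition lpoly (p : {poly 'F_2}) : laurent := \sum_(i < size p) << p`_i *g i%:Z >>.

Lemma mcoeff_lpoly p n : (lpoly p)@_n = if n is Posz m then p`_m else 0.
Proof.
rewrite /lpoly raddf_sum /=.
case: n => [m|m]; last by rewrite big1 // => i _; rewrite mcoeffU.
have [lt_m|le_m] := ltnP m (size p).
  rewrite (bigD1 (Ordinal lt_m)) //= mcoeffUU big1 ?addr0 // => i ne_im.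
  by rewrite mcoeffU; case: eqP => // -[im]; rewrite -val_eqE /= im eqxx in ne_im.
rewrite nth_default // big1 // => i _; rewrite mcoeffU; case: eqP => // -[im].
by move: (ltn_ord i); rewrite im ltnNge le_m.
Qed.

Lemma lpoly_inj : injective lpoly.
Proof.
by move=> p q E; apply/polyP => i; have := congr1 (mcoeff (Posz i)) E; rewrite !mcoeff_lpoly.
Qed.

Lemma lpolyD p q : lpoly (p + q) = lpoly p + lpoly q.
Proof. by apply/malgP => -[m|m]; rewrite mcoeffD !mcoeff_lpoly ?coefD ?addr0. Qed.

Lemma lpoly0 : lpoly 0 = 0.
Proof. by apply/malgP => -[m|m]; rewrite mcoeff0 mcoeff_lpoly ?coef0. Qed.

Lemma lpoly_monomial c i : lpoly (c *: 'X^i) = << c *g i%:Z >>.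
Proof.
apply/malgP => -[m|m]; rewrite mcoeff_lpoly mcoeffU // coefZ coefXn eqz_nat eq_sym.
by case: (i == m); rewrite ?mulr1 ?mulr0.
Qed.

Lemma lpolyXn i : lpoly 'X^i = upow i.
Proof. by rewrite -[_ ^+ _]scale1r lpoly_monomial. Qed.

Lemma lpolyM p q : lpoly (p * q) = lpoly p * lpoly q.
Proof.
have lpoly_sum (I : Type) (s : seq I) (F : I -> {poly 'F_2}) :
    lpoly (\sum_(i <- s) F i) = \sum_(i <- s) lpoly (F i).
  exact: (big_morph lpoly lpolyD lpoly0).
rewrite -[p]coefK -[q]coefK !poly_def big_distrl /= !lpoly_sum big_distrl /=.
apply: eq_bigr => i _; rewrite big_distrr lpoly_sum big_distrr /=.
apply: eq_bigr => j _.
by rewrite -scalerAl -scalerAr scalerA -exprD !lpoly_monomial [RHS]lmulUU PoszD.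
Qed.

Lemma laurent_lpoly (f : laurent) : exists N : nat, forall M, (N <= M)%N ->
  exists F, f = upow (- M%:Z) * lpoly F.
Proof.
rewrite [f]monalgE; apply: (big_ind (fun g : laurent => exists N : nat,
  forall M, (N <= M)%N -> exists F, g = upow (- M%:Z) * lpoly F)).
- by exists 0%N => M _; exists 0; rewrite lpoly0 mulr0.
- move=> g h [N1 H1] [N2 H2]; exists (maxn N1 N2) => M.
  rewrite geq_max => /andP [/H1 [F1 ->] /H2 [F2 ->]].
  by exists (F1 + F2); rewrite lpolyD mulrDr.
- move=> k _; exists (absz k) => M le_kM.
  exists (f@_k *: 'X^(absz (M%:Z + k))).
  rewrite lpoly_monomial /upow [_ * _]lmulUU mul1r; congr << _ *g _ >>; lia.
Qed.

Lemma upowM_eq0 k (f : laurent) : (upow k * f == 0) = (f == 0).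
Proof.
apply/eqP/eqP => [E|->]; last exact: mulr0.
by rewrite -[f]mul1r -(upowNK k) -mulrA E mulr0.
Qed.

Lemma laurent_mul_eq0 (f g : laurent) : (f * g == 0) = (f == 0) || (g == 0).
Proof.
apply/idP/idP => [|/orP [] /eqP ->]; rewrite ?mul0r ?mulr0 //.
have [Nf Hf] := laurent_lpoly f; have [Ng Hg] := laurent_lpoly g.
have [F ->] := Hf _ (leq_maxl Nf Ng); have [G ->] := Hg _ (leq_maxr Nf Ng).
by rewrite mulrACA -upowD !upowM_eq0 -lpolyM -lpoly0 !(inj_eq lpoly_inj) mulf_eq0.
Qed.

Lemma laurent_mulfK (f g h : laurent) : f != 0 -> f * g = f * h -> g = h.
Proof.
move=> nz_f E; apply/eqP; rewrite -subr_eq0.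
by have /eqP := subrr (f * h); rewrite -{1}E -mulrBr laurent_mul_eq0 (negbTE nz_f).
Qed.

Lemma msupp_laurent_eq0 (f : laurent) : (msupp f == fset0) = (f == 0).
Proof.
apply/eqP/eqP => [/fsetP f0|->]; last exact: msupp0.
by apply/malgP => n; rewrite mcoeff0 mcoeff_outdom // f0.
Qed.

(* Clearing the denominators u^N reduces this to [quadratic_root_monomial] over F_2[X]. *)
Lemma laurent_quadratic_root (c q t : laurent) : q != 0 ->
  c ^+ 2 + t * q * c + q ^+ 2 = 0 -> exists k, c = upow k * q.
Proof.
move=> nz_q E.
have [Nc Hc] := laurent_lpoly c; have [Nq Hq] := laurent_lpoly q.
have [Nt Ht] := laurent_lpoly t; set N := (Nc + Nq + Nt)%N.
have [C defc] := Hc N ltac:(lia); have [D defq] := Hq N ltac:(lia).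
have [T deft] := Ht N ltac:(lia).
have nz_D : D != 0 by apply: contraNneq nz_q => D0; rewrite defq D0 lpoly0 mulr0.
have EP : 'X^N * (C ^+ 2 + D ^+ 2) + T * C * D = 0.
  apply: lpoly_inj; rewrite lpoly0 lpolyD !lpolyM lpolyD !lpolyM lpolyXn.
  have VU : upow (- N%:Z) * upow N = 1 := upowNK _.
  transitivity (upow N ^+ 3 * (c ^+ 2 + t * q * c + q ^+ 2)); last by rewrite E mulr0.
  rewrite defc defq deft; transitivity ((upow (- N%:Z) * upow N) ^+ 2 * upow N *
    (lpoly C * lpoly C + lpoly D * lpoly D) + (upow (- N%:Z) * upow N) ^+ 3 *
    (lpoly T * lpoly C * lpoly D)); last by ring.
  by rewrite VU !expr1n !mul1r.
have [i [j /eqp_F2 /(congr1 lpoly)]] := quadratic_root_monomial nz_D EP.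
rewrite !lpolyM !lpolyXn => EX; exists (i%:Z - j%:Z).
apply: (@laurent_mulfK (upow j)); first by rewrite -(upowM_eq0 (- j%:Z)) upowNK oner_neq0.
have Ui : upow i = upow (i%:Z - j%:Z) * upow j by rewrite -upowD subrK.
rewrite defc defq; transitivity (upow (- N%:Z) * (lpoly C * upow j)); first by ring.
by rewrite EX Ui; ring.
Qed.

(** * Two-by-two matrices *)

Lemma ord2P (i : 'I_2) : i = 0 \/ i = 1.
Proof. by case: i => [[|[|//]]] ?; [left | right]; apply/val_inj. Qed.

Lemma lift0_ord2 : lift ord0 ord0 = 1 :> 'I_2.
Proof. exact: val_inj. Qed.

Section TwoByTwo.
Variable R : comNzRingType.
Implicit Types A : 'M[R]_2.

Lemma mulmx2E m n (A : 'M[R]_(m, 2)) (B : 'M[R]_(2, n)) i j :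
  (A *m B) i j = A i 0 * B 0 j + A i 1 * B 1 j.
Proof. by rewrite mxE !big_ord_recl big_ord0 addr0 lift0_ord2. Qed.

Lemma mxtrace2 A : \tr A = A 0 0 + A 1 1.
Proof. by rewrite /mxtrace !big_ord_recl big_ord0 addr0 lift0_ord2. Qed.

Lemma det_mx22 A : \det A = A 0 0 * A 1 1 - A 0 1 * A 1 0.
Proof.
rewrite (expand_det_row A 0) !big_ord_recl big_ord0 addr0 /cofactor !det_mx11 !mxE.
have -> : lift 0 0 = 1 :> 'I_2 by apply: val_inj.
have -> : lift 1 0 = 0 :> 'I_2 by apply: val_inj.
by rewrite /= expr0 expr1 !mul1r mulN1r mulrN.
Qed.

Lemma cayley_hamilton2 A : A * A = \tr A *: A - (\det A)%:M.
Proof.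
apply/matrixP => i j; rewrite [LHS]mulmx2E !mxE mxtrace2 det_mx22.
by case: (ord2P i) => ->; case: (ord2P j) => -> /=; ring.
Qed.

Lemma mx2_exp_linear A m : exists Q P, A ^+ m = Q *: A + P%:M.
Proof.
elim: m => [|m [Q [P IH]]]; first by exists 0, 1; rewrite expr0 scale0r add0r.
exists (Q * \tr A + P), (- (Q * \det A)).
rewrite exprS IH mulrDr -scalerAr cayley_hamilton2 [A * _](mul_mx_scalar P A).
by rewrite scalerBr scalerA scalerDl scale_scalar_mx raddfN addrAC.
Qed.

End TwoByTwo.

Lemma det_mx_exp (R : comNzRingType) n (A : 'M[R]_n.+1) m : \det (A ^+ m) = \det A ^+ m.
Proof. by elim: m => [|m IH]; rewrite ?det1 // exprS det_mulmx IH exprS. Qed.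

Lemma mulmx_exp_eq0 (R : comNzRingType) n p (A : 'M[R]_n.+1) m (v : 'M[R]_(n.+1, p)) :
  \det A = 1 -> A ^+ m *m v = 0 -> v = 0.
Proof.
move=> detA1 Av0; have detAm : \det (A ^+ m) = 1 by rewrite det_mx_exp detA1 expr1n.
by rewrite -[v]mul1mx -detAm -mul_adj_mx -mulmxA Av0 mulmx0.
Qed.

Lemma cV2P (R : Type) (y w : 'cV[R]_2) : y 0 0 = w 0 0 -> y 1 0 = w 1 0 -> y = w.
Proof. by move=> E0 E1; apply/matrixP => i j; rewrite ord1; case: (ord2P i) => ->. Qed.

Lemma cV2_neq0 (R : zmodType) (y : 'cV[R]_2) : y != 0 -> exists i, y i 0 != 0.
Proof.
move=> nz_y; have [E0|] := eqVneq (y 0 0) 0; last by exists 0.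
have [E1|] := eqVneq (y 1 0) 0; last by exists 1.
by move: nz_y; rewrite (@cV2P _ y 0) ?mxE ?eqxx.
Qed.

Lemma laurent_cayley_hamilton (a : 'M[laurent]_2) :
  \det a = 1 -> a * a = \tr a *: a + 1.
Proof.
by move=> deta1; rewrite cayley_hamilton2 deta1 -raddfN (oppr_pchar2 pchar_laurent).
Qed.

Lemma parallel_cV2 (R : comNzRingType) (y w : 'cV[R]_2) :
  y 0 0 * w 1 0 = y 1 0 * w 0 0 -> forall i j, y i 0 * w j 0 = w i 0 * y j 0.
Proof.
move=> E i j; case: (ord2P i) => ->; case: (ord2P j) => ->; first exact: mulrC.
- by rewrite E mulrC.
- by rewrite -E mulrC.
- exact: mulrC.
Qed.

(** * Vectors returning to a translate of themselves *)

(* If y and a y are parallel, (a y)_i / y_i solves z^2 + (tr a) z + 1 = 0, so it is a monomial. *)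
Lemma parallel_eigenvector (a : 'M[laurent]_2) (y : 'cV[laurent]_2) :
  \det a = 1 -> y != 0 -> y 0 0 * (a *m y) 1 0 = y 1 0 * (a *m y) 0 0 ->
  exists k, a *m y = upow k *: y.
Proof.
move=> deta1 /cV2_neq0 [i nz_yi] /parallel_cV2 par; set w := a *m y in par *.
have aw : a *m w = \tr a *: w + y.
  rewrite /w mulmxA -[a *m a]/(a * a) laurent_cayley_hamilton //.
  by rewrite mulmxDl -scalemxAl mul1mx.
have root : w i 0 ^+ 2 + \tr a * y i 0 * w i 0 + y i 0 ^+ 2 = 0.
  have : y i 0 * (a *m w) i 0 = w i 0 * w i 0.
    transitivity (a i 0 * (y i 0 * w 0 0) + a i 1 * (y i 0 * w 1 0)).
      by rewrite mulmx2E; ring.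
    rewrite !par; transitivity (w i 0 * (a i 0 * y 0 0 + a i 1 * y 1 0)); first by ring.
    by rewrite -mulmx2E.
  have -> : (a *m w) i 0 = \tr a * w i 0 + y i 0 by rewrite aw !mxE.
  rewrite -expr2 => <-.
  transitivity ((y i 0 * (\tr a * w i 0 + y i 0)) *+ 2); first by ring.
  by rewrite mulr2n (addrr_pchar2 pchar_laurent).
have [k wk] := laurent_quadratic_root nz_yi root.
exists k; apply/cV2P; rewrite [RHS]mxE; apply: (laurent_mulfK nz_yi); rewrite par wk; ring.
Qed.

Lemma exp_scalar_of_nonparallel (a : 'M[laurent]_2) p (c : laurent) (y : 'cV[laurent]_2) :
  y 0 0 * (a *m y) 1 0 != y 1 0 * (a *m y) 0 0 -> a ^+ p *m y = c *: y ->
  a ^+ p = c%:M.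
Proof.
move=> npar; have [Q [P ->]] := mx2_exp_linear a p => E.
have entry i : Q * (a *m y) i 0 = (c - P) * y i 0.
  have := congr1 (fun v : 'cV[laurent]_2 => v i 0) E.
  by rewrite /= mulmxDl -scalemxAl mul_scalar_mx !mxE mulrBl => <-; rewrite addrK.
have Q0 : Q = 0.
  apply/eqP; have : Q * (y 0 0 * (a *m y) 1 0 - y 1 0 * (a *m y) 0 0) == 0.
    apply/eqP; transitivity (y 0 0 * (Q * (a *m y) 1 0) - y 1 0 * (Q * (a *m y) 0 0)).
      by ring.
    by rewrite !entry; ring.
  by rewrite laurent_mul_eq0 subr_eq0 (negbTE npar) orbF.
have nz_y : y != 0 by apply: contraNneq npar => ->; rewrite !mxE !mul0r.
have [i nz_yi] := cV2_neq0 nz_y.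
have : (c - P) * y i 0 == 0 by rewrite -entry Q0 mul0r.
rewrite laurent_mul_eq0 (negbTE nz_yi) orbF subr_eq0 => /eqP <-.
by rewrite Q0 scale0r add0r.
Qed.

Section Fractal.
Variable a : 'M[laurent]_2.
Hypothesis frac : fractal a.

Let deta1 : \det a = 1. Proof. by case: frac => -[]. Qed.

Lemma fractal_eigenvector_eq0 k (y : 'cV[laurent]_2) : a *m y = upow k *: y -> y = 0.
Proof.
move=> ay; have [//|nz_y] := eqVneq y 0; exfalso.
have [k0|nz_k] := eqVneq k 0; last by case: frac => _ [_]; apply; exists y, k.
rewrite k0 upow0 scale1r in ay.
have tr0 : \tr a = 0.
  have aay : (a * a) *m y = y by rewrite -[a * a]/(a *m a) -mulmxA !ay.
  have : \tr a *: y + y = 0 + y.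
    by rewrite add0r -{3}aay laurent_cayley_hamilton // mulmxDl mul1mx -scalemxAl ay.
  move/addIr/matrixP; have [i nz_yi] := cV2_neq0 nz_y.
  move/(_ i 0); rewrite !mxE => /eqP.
  by rewrite laurent_mul_eq0 (negbTE nz_yi) orbF => /eqP.
case: frac => _ [+ _]; apply; exists 2%N; split => //.
by rewrite expr2 laurent_cayley_hamilton // tr0 scale0r add0r.
Qed.

Lemma fractal_no_return (y : 'cV[laurent]_2) p s :
  y != 0 -> (0 < p)%N -> a ^+ p *m y = upow s *: y -> False.
Proof.
move=> nz_y p_gt0 E.
have [par|npar] := eqVneq (y 0 0 * (a *m y) 1 0) (y 1 0 * (a *m y) 0 0).
  have [k /fractal_eigenvector_eq0 y0] := parallel_eigenvector deta1 nz_y par.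
  by rewrite y0 eqxx in nz_y.
have ap := exp_scalar_of_nonparallel npar E.
have us2 : upow s ^+ 2 = 1 by rewrite -(@det_scalar _ 2) -ap det_mx_exp deta1 expr1n.
case: frac => _ [+ _]; apply; exists (p * 2)%N; split; first by rewrite muln_gt0 p_gt0.
by rewrite exprM ap expr2 -[_ * _]/(_ *m _) -scalar_mxM -expr2 us2.
Qed.

End Fractal.

(** * Pauli supports and the light cone *)

Definition pauli_supp (v : 'cV[laurent]_2) : {fset int} :=
  msupp (v 0 0) `|` msupp (v 1 0).

Implicit Types v w : 'cV[laurent]_2.

Lemma pauli_weightE v : pauli_weight v = #|` pauli_supp v|.
Proof. by []. Qed.

Lemma in_pauli_supp v n :
  (n \in pauli_supp v) = (n \in msupp (v 0 0)) || (n \in msupp (v 1 0)).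
Proof. exact: in_fsetU. Qed.

Lemma msupp_pauli_supp v i n : n \in msupp (v i 0) -> n \in pauli_supp v.
Proof. by rewrite in_pauli_supp; case: (ord2P i) => -> ->; rewrite ?orbT. Qed.

Lemma pauli_supp_eq0 v : (pauli_supp v == fset0) = (v == 0).
Proof.
rewrite fsetU_eq0 !msupp_laurent_eq0; apply/andP/eqP => [[/eqP v0 /eqP v1]|->].
  by apply/cV2P; rewrite mxE.
by rewrite !mxE eqxx.
Qed.

Lemma pauli_weight_gt0 v : (0 < pauli_weight v)%N = (v != 0).
Proof. by rewrite cardfs_gt0 pauli_supp_eq0. Qed.

Lemma in_pauli_supp_upowZ k v n :
  (n \in pauli_supp (upow k *: v)) = (n - k \in pauli_supp v).
Proof. by rewrite !in_pauli_supp !mxE !msupp_upowM. Qed.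

Lemma pauli_weight_upowZ k v : pauli_weight (upow k *: v) = pauli_weight v.
Proof.
rewrite !pauli_weightE; have -> : pauli_supp (upow k *: v) = [fset i + k | i in pauli_supp v].
  apply/fsetP => n; rewrite in_pauli_supp_upowZ.
  apply/idP/imfsetP => [nk|[i vi ->]]; last by rewrite addrK.
  by exists (n - k); rewrite ?subrK.
by rewrite card_imfset //= => i j /addIr.
Qed.

Lemma upowZ_eq0 k (v : 'cV[laurent]_2) : (upow k *: v == 0) = (v == 0).
Proof. by apply: negb_inj; rewrite -!pauli_weight_gt0 pauli_weight_upowZ. Qed.

Lemma pauli_weightD v w : [disjoint pauli_supp v & pauli_supp w] ->
  pauli_weight (v + w) = (pauli_weight v + pauli_weight w)%N.
Proof.
move=> vw; have entry i : [disjoint msupp (v i 0) & msupp (w i 0)].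
  apply/fdisjointP => n /(msupp_pauli_supp) vn.
  by apply: contraNN (fdisjointP vw n vn) => /msupp_pauli_supp.
rewrite !pauli_weightE /pauli_supp !mxE !msuppD // fsetUACA cardfsU.
by move: vw; rewrite -fsetI_eq0 => /eqP ->; rewrite cardfs0 subn0.
Qed.

Lemma seq_int_min (s : seq int) : s != [::] ->
  exists2 lo, lo \in s & forall i, i \in s -> lo <= i.
Proof.
elim: s => [//|x [|y s] IH] _; first by exists x => [|i]; rewrite ?mem_head // inE => /eqP ->.
have [lo slo lo_min] := IH isT; have [le_xlo|lt_lox] := boolP (x <= lo).
  by exists x => [|i]; rewrite ?mem_head // inE => /predU1P [->//|/lo_min]; lia.
exists lo => [|i]; first by rewrite inE slo orbT.
by rewrite inE => /predU1P [->|/lo_min //]; lia.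
Qed.

Lemma pauli_supp_min (v : 'cV[laurent]_2) : v != 0 ->
  exists2 lo, lo \in pauli_supp v & forall i, i \in pauli_supp v -> lo <= i.
Proof.
rewrite -pauli_supp_eq0 => nz; apply: seq_int_min.
apply: contraNneq nz => v0; apply/eqP/fsetP => i.
by rewrite in_fset0 -[LHS]/(i \in enum_fset _) v0.
Qed.

Definition mrestrict (P : pred int) (f : laurent) : laurent :=
  [malg k in msupp f => if P k then f@_k else 0].

Lemma mcoeff_restrict P f n : (mrestrict P f)@_n = if P n then f@_n else 0.
Proof.
rewrite mcoeffE; case: ifP => // fn.
by case: (P n); rewrite // mcoeff_outdom ?fn.
Qed.

Definition pauli_restrict (P : pred int) v : 'cV[laurent]_2 := map_mx (mrestrict P) v.

Lemma in_pauli_supp_restrict P v n :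
  (n \in pauli_supp (pauli_restrict P v)) = P n && (n \in pauli_supp v).
Proof.
by rewrite !in_pauli_supp !mxE -!mcoeff_neq0 !mcoeff_restrict; case: (P n); rewrite ?eqxx.
Qed.

Lemma pauli_restrictC P v : pauli_restrict P v + pauli_restrict (predC P) v = v.
Proof.
apply/matrixP => i j; apply/malgP => n; rewrite !mxE mcoeffD !mcoeff_restrict /=.
by case: (P n); rewrite ?addr0 ?add0r.
Qed.

Lemma laurent_mx_radius (a : 'M[laurent]_2) :
  exists r : nat, forall i j k, k \in msupp (a i j) -> (`|k| <= r)%N.
Proof.
exists (\max_i \max_j \max_(k <- msupp (a i j)) `|k|)%N => i j k ak.
apply: leq_trans (leq_bigmax i); apply: leq_trans (leq_bigmax j).
exact: leq_bigmax_seq.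
Qed.

Section LightCone.
Variables (a : 'M[laurent]_2) (r : nat).
Hypothesis radius_a : forall i j k, k \in msupp (a i j) -> (`|k| <= r)%N.

Lemma pauli_supp_mulmx v n : n \in pauli_supp (a *m v) ->
  exists2 q, q \in pauli_supp v & (`|n - q| <= r)%N.
Proof.
have entry i j : n \in msupp (a i j * v j 0) ->
    exists2 q, q \in pauli_supp v & (`|n - q| <= r)%N.
  case/msuppM => k1 [k2 [/radius_a ak vk ->]].
  by exists k2; [exact: msupp_pauli_supp vk | rewrite addrK].
rewrite in_pauli_supp => nv.
have [i ni] : exists i, n \in msupp ((a *m v) i 0) by case/orP: nv; [exists 0 | exists 1].
by move: ni; rewrite mulmx2E => /(fsubsetP (msuppD_le _ _)) /fsetUP [] /entry.
Qed.

Lemma pauli_supp_mulmx_exp m v n : n \in pauli_supp (a ^+ m *m v) ->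
  exists2 q, q \in pauli_supp v & (`|n - q| <= r * m)%N.
Proof.
elim: m n => [|m IH] n; first by rewrite expr0 mul1mx => vn; exists n; rewrite ?subrr.
rewrite exprS -mulmxA => /pauli_supp_mulmx [p /IH [q vq pq] np].
by exists q => //; rewrite mulnS; lia.
Qed.

End LightCone.

(** * Growth of the weight along an orbit *)

Definition window_vector L (t : {ffun 'I_2 * 'I_L.+1 -> 'F_2}) : 'cV[laurent]_2 :=
  \col_i lpoly (\poly_(j < L.+1) t (i, inord j)).

Lemma window_vectorP L (v : 'cV[laurent]_2) :
  (forall n, n \in pauli_supp v -> 0 <= n <= L%:Z) -> v \in codom (@window_vector L).
Proof.
move=> vL; pose t := [ffun ij : 'I_2 * 'I_L.+1 => (v ij.1 0)@_(ij.2 : nat)%:Z].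
suff -> : v = window_vector t by exact: codom_f.
have out n i : ~~ (0 <= n <= L%:Z) -> (v i 0)@_n = 0.
  by move=> nL; apply/eqP; rewrite mcoeff_eq0; apply: contra nL => /msupp_pauli_supp /vL.
apply/matrixP => i j; rewrite ord1 mxE; apply/malgP => n.
rewrite mcoeff_lpoly; case: n => [m|m]; last exact: out.
rewrite coef_poly; case: ltnP => [mL|Lm]; last by apply: out; lia.
by rewrite ffunE /= inordK.
Qed.

Lemma seq_uniform_bound (T : eqType) (s : seq T) (P : T -> nat -> Prop) :
  (forall x, x \in s -> exists m, P x m) ->
  exists M, forall x, x \in s -> exists2 m, (m <= M)%N & P x m.
Proof.
elim: s => [|x s IH] Hs; first by exists 0%N.
have [m Pxm] := Hs x (mem_head x s).
have [M HM] := IH (fun y ys => Hs y ltac:(by rewrite inE ys orbT)).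
exists (maxn m M) => y; rewrite inE => /predU1P [->|ys]; first by exists m; rewrite ?leq_maxl.
by have [m' le_m'M Pym'] := HM y ys; exists m' => //; rewrite (leq_trans le_m'M) ?leq_maxr.
Qed.

Lemma nat_pigeonhole (T : finType) (f : nat -> T) :
  exists n1 n2, (n1 < n2)%N /\ f n1 = f n2.
Proof.
have /injectivePn [i [j ne_ij fij]] : ~~ injectiveb (fun i : 'I_#|T|.+1 => f i).
  by apply/injectiveP => /leq_card; rewrite card_ord ltnn.
case: (ltngtP i j) => [lt_ij|lt_ji|/val_inj eq_ij]; last by rewrite eq_ij eqxx in ne_ij.
  by exists i, j.
by exists j, i.
Qed.

Definition weight_reaches (a : 'M[laurent]_2) (B : nat) (v : 'cV[laurent]_2) : Prop :=
  exists m, (B <= pauli_weight (a ^+ m *m v))%N.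

Definition reaches_within (a : 'M[laurent]_2) (B M L : nat) : Prop :=
  forall z lo, z != 0 -> (forall n, n \in pauli_supp z -> lo <= n <= lo + L%:Z) ->
  exists2 m, (m <= M)%N & (B <= pauli_weight (a ^+ m *m z))%N.

(* Up to translation, there are finitely many vectors of support width at most L. *)
Lemma uniform_reach_time (a : 'M[laurent]_2) (B L : nat) :
  (forall v, v != 0 -> weight_reaches a B v) -> exists M, reaches_within a B M L.
Proof.
move=> reach.
have reach0 (w : 'cV[laurent]_2) : exists m, w != 0 -> (B <= pauli_weight (a ^+ m *m w))%N.
  have [->|/reach [m Bm]] := eqVneq w 0; last by exists m.
  by exists 0%N.
have [M HM] := @seq_uniform_bound _ (codom (@window_vector L)) _ (fun w _ => reach0 w).
exists M => z lo nz_z zL.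
have win : upow (- lo) *: z \in codom (@window_vector L).
  by apply: window_vectorP => n; rewrite in_pauli_supp_upowZ opprK => /zL; lia.
have [m le_mM] := HM _ win; rewrite -scalemxAr pauli_weight_upowZ upowZ_eq0 => Bm.
by exists m => //; apply: Bm.
Qed.

Definition supp_below (v : 'cV[laurent]_2) (c : int) : {fset int} :=
  [fset i in pauli_supp v | i <= c].

Lemma card_supp_below_lt v c c' n : c <= c' -> n \in pauli_supp v -> c < n <= c' ->
  (#|` supp_below v c| < #|` supp_below v c'|)%N.
Proof.
move=> le_cc' vn /andP [cn nc']; apply: fproper_ltn_card; rewrite fproperE.
apply/andP; split; first by apply/fsubsetP => i; rewrite !inE => /andP [-> ic]; lia.
by apply/negP => /fsubsetP /(_ n); rewrite !inE -in_pauli_supp vn nc' /=; lia.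
Qed.

Section GapSplitting.
Variables (a : 'M[laurent]_2) (r B : nat).
Hypothesis deta1 : \det a = 1.
Hypothesis radius_a : forall i j k, k \in msupp (a i j) -> (`|k| <= r)%N.

(* Two parts of w separated by a gap wider than twice the light-cone radius evolve
   independently for M steps, so their weights add up. *)
Lemma gap_weight_gain (S M : nat) (w : 'cV[laurent]_2) (lo : int) :
  reaches_within a B M S -> lo \in pauli_supp w ->
  (forall n, n \in pauli_supp w -> lo <= n) ->
  (forall n, n \in pauli_supp w -> n <= lo + S%:Z \/ lo + (S + 2 * (r * M))%N%:Z < n) ->
  (exists2 n, n \in pauli_supp w & lo + S%:Z < n) ->
  exists m, (B < pauli_weight (a ^+ m *m w))%N.
Proof.
move=> reachM wlo lo_min gap [n wn lt_n].
pose P := fun i : int => i <= lo + S%:Z.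
pose z := pauli_restrict P w; pose z' := pauli_restrict (predC P) w.
have nz_z : z != 0.
  rewrite -pauli_supp_eq0; apply/fset0Pn; exists lo.
  by rewrite in_pauli_supp_restrict wlo andbT /P; lia.
have nz_z' : z' != 0.
  rewrite -pauli_supp_eq0; apply/fset0Pn; exists n.
  by rewrite in_pauli_supp_restrict wn /= /P; lia.
have [m le_mM Bm] : exists2 m, (m <= M)%N & (B <= pauli_weight (a ^+ m *m z))%N.
  apply: (reachM z lo) => // i; rewrite in_pauli_supp_restrict => /andP [Pi wi].
  by move: (lo_min i wi) Pi; rewrite /P; lia.
have disj : [disjoint pauli_supp (a ^+ m *m z) & pauli_supp (a ^+ m *m z')].
  apply/fdisjointP => p /(pauli_supp_mulmx_exp radius_a) [q zq pq].
  apply/negP => /(pauli_supp_mulmx_exp radius_a) [q' zq' pq'].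
  move: zq zq'; rewrite !in_pauli_supp_restrict /= /P => /andP [q_le _] /andP [q'_gt /gap].
  have : (r * m <= r * M)%N by rewrite leq_mul2l le_mM orbT.
  lia.
exists m; rewrite -(pauli_restrictC P w) -/z -/z' mulmxDr pauli_weightD //.
have : (0 < pauli_weight (a ^+ m *m z'))%N.
  by rewrite pauli_weight_gt0; apply: contra nz_z' => /eqP /(mulmx_exp_eq0 deta1) ->.
lia.
Qed.

End GapSplitting.

Section BoundedOrbit.
Variables (a : 'M[laurent]_2) (r B : nat) (v : 'cV[laurent]_2).
Hypothesis deta1 : \det a = 1.
Hypothesis radius_a : forall i j k, k \in msupp (a i j) -> (`|k| <= r)%N.
Hypothesis reach_B : forall w, w != 0 -> weight_reaches a B w.
Hypothesis nz_v : v != 0.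
Hypothesis weight_v_le : forall m, (pauli_weight (a ^+ m *m v) <= B)%N.

Let x n := a ^+ n *m v.

Let x_neq0 n : x n != 0.
Proof. by apply: contra nz_v => /eqP /(mulmx_exp_eq0 deta1) ->. Qed.

Let weight_x_le n m : (pauli_weight (a ^+ m *m x n) <= B)%N.
Proof. by rewrite mulmxA -[a ^+ m *m a ^+ n]/(a ^+ m * a ^+ n) -exprD weight_v_le. Qed.

(* The windows grow as S' = S + 2 r M: a support point beyond lo + S either lies in
   (lo + S, lo + S'], adding to the count, or lies beyond a gap forbidden by
   [gap_weight_gain]. *)
Lemma orbit_cluster j : exists S : nat, forall n lo, lo \in pauli_supp (x n) ->
  (forall i, i \in pauli_supp (x n) -> lo <= i) ->
  (forall i, i \in pauli_supp (x n) -> i <= lo + S%:Z) \/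
  (j < #|` supp_below (x n) (lo + S%:Z)|)%N.
Proof.
elim: j => [|j [S IH]].
  exists 0%N => n lo xlo _; right; rewrite cardfs_gt0; apply/fset0Pn; exists lo.
  by rewrite !inE -in_pauli_supp xlo /=; lia.
have [M reachM] := uniform_reach_time S reach_B.
exists (S + 2 * (r * M))%N => n lo xlo lo_min.
have [inS|cnt] := IH n lo xlo lo_min; first by left => i /inS; lia.
set S' := (S + 2 * (r * M))%N.
have [/hasP [i xi /andP [Si iS']]|/hasPn no_mid] :=
  boolP (has (fun i => (lo + S%:Z < i) && (i <= lo + S'%:Z)) (pauli_supp (x n))).
  by right; apply: leq_ltn_trans cnt (card_supp_below_lt _ xi _) => //; lia.
have [/hasP [i xi Si]|/hasPn inS] := boolP (has (fun i => lo + S%:Z < i) (pauli_supp (x n))).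
  have gap k : k \in pauli_supp (x n) -> k <= lo + S%:Z \/ lo + S'%:Z < k.
    by move=> /no_mid; lia.
  have [m Bm] := gap_weight_gain deta1 radius_a reachM xlo lo_min gap (ex_intro2 _ _ i xi Si).
  by move: (weight_x_le n m); lia.
by left => k /inS; lia.
Qed.

Lemma orbit_width : exists S : nat, forall n lo, lo \in pauli_supp (x n) ->
  (forall i, i \in pauli_supp (x n) -> lo <= i) ->
  forall i, i \in pauli_supp (x n) -> i <= lo + S%:Z.
Proof.
have [S cluster] := orbit_cluster B; exists S => n lo xlo lo_min.
case: (cluster n lo xlo lo_min) => // cnt; exfalso.
have : (#|` supp_below (x n) (lo + S%:Z)| <= pauli_weight (x n))%N.
  by apply: fsubset_leq_card; apply/fsubsetP => i; rewrite inE => /andP [].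
by move: (weight_x_le n 0); rewrite expr0 mul1mx; lia.
Qed.

(* By [orbit_width], up to translation the orbit takes finitely many values. *)
Lemma bounded_orbit_translate : exists (y : 'cV[laurent]_2) (p : nat) (s : int),
  [/\ y != 0, (0 < p)%N & a ^+ p *m y = upow s *: y].
Proof.
have [S width] := orbit_width.
have window n : exists p : int * {ffun 'I_2 * 'I_S.+1 -> 'F_2},
    x n == upow p.1 *: window_vector p.2.
  have [lo xlo lo_min] := pauli_supp_min (x_neq0 n).
  have /codomP [t tE] : upow (- lo) *: x n \in codom (@window_vector S).
    apply: window_vectorP => i; rewrite in_pauli_supp_upowZ opprK => xi.
    by move: (lo_min _ xi) (width n lo xlo lo_min _ xi); lia.
  by exists (lo, t); rewrite /= -tE scalerA -upowD subrr upow0 scale1r.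
have [lo_t lo_tP] : exists lo_t : nat -> int * {ffun 'I_2 * 'I_S.+1 -> 'F_2},
    forall n, x n = upow (lo_t n).1 *: window_vector (lo_t n).2.
  by exists (fun n => xchoose (window n)) => n; apply/eqP/(xchooseP (window n)).
have [n1 [n2 [lt_n12 /= E]]] := nat_pigeonhole (fun n => (lo_t n).2).
exists (x n1), (n2 - n1)%N, ((lo_t n2).1 - (lo_t n1).1).
split; [exact: x_neq0 | by rewrite subn_gt0 |].
have -> : a ^+ (n2 - n1) *m x n1 = x n2.
  rewrite /x mulmxA -[a ^+ (n2 - n1) *m a ^+ n1]/(a ^+ (n2 - n1) * a ^+ n1).
  by rewrite -exprD (subnK (ltnW lt_n12)).
by rewrite (lo_tP n2) (lo_tP n1) E scalerA -upowD subrK.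
Qed.

End BoundedOrbit.

Lemma fractal_weight_step (a : 'M[laurent]_2) (B : nat) : fractal a ->
  (forall w, w != 0 -> weight_reaches a B w) ->
  forall v, v != 0 -> weight_reaches a B.+1 v.
Proof.
move=> frac reach_B v nz_v; apply: NNPP => not_reach.
have weight_le m : (pauli_weight (a ^+ m *m v) <= B)%N.
  by rewrite leqNgt; apply/negP => Bm; apply: not_reach; exists m.
have deta1 : \det a = 1 by case: frac => -[].
have [r radius_a] := laurent_mx_radius a.
have [y [p [s [nz_y p_gt0 E]]]] :=
  bounded_orbit_translate deta1 radius_a reach_B nz_v weight_le.
exact: (fractal_no_return frac nz_y p_gt0 E).
Qed.

Unset Implicit Arguments.

Theorem lemmaA2 (a : 'M[laurent]_2) (Hfrac : fractal a)
  (xi : 'cV[laurent]_2) (Hxi : xi != 0) :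
  forall k : nat, exists m : nat, (k <= pauli_weight ((a ^+ m) *m xi))%N.
Proof.
move=> k; elim: k xi Hxi => [|k IH] xi Hxi; first by exists 0%N.
exact: fractal_weight_step Hfrac IH xi Hxi.
Qed.
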